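(* Let $P$ be a full-dimensional integer polytope in $\mathbb{R}^d$ (all vertices in $\mathbb{Z}^d$). Then for every $0\le i\le d$, the quasi-coefficient $a_i(t)$ is periodic in $t$ with period $1$: $a_i(t+1)=a_i(t)$ for all real $t>0$.
   Context: $a_i(t) := \lim_{\epsilon\to 0^+}\sum_{\xi\in\mathbb{Z}^d}\sum_{\mathbf{T}: l(\mathbf{T})=d-i}\mathcal{R}_{\mathbf{T}}(\xi)\mathcal{E}_{\mathbf{T}}(t\xi)\mathbf{1}_{S(\mathbf{T})}(\xi)e^{-\pi\epsilon\|\xi\|^2}$ (these satisfy $A_P(t)=\sum_i a_i(t)t^i$ where $A_P(t)=\sum_{x\in\mathbb{Z}^d}\omega_{tP}(x)$). Notation: a rooted chain of length $k$ is $\mathbf{T}=(P=F_0\to\cdots\to F_k)$ with $F_j$ a facet of $F_{j-1}$, $l(\mathbf{T})=k$; $S(\mathbf{T})$ is the set of $\xi\in\mathbb{R}^d$ orthogonal to the tangent space of $F_k$ but not to that of $F_{k-1}$ ($\{0\}$ if $k=0$); $\mathrm{proj}_F$ is orthogonal projection onto the tangent space of $F$; $N_F(G)$ the outward unit normal of a facet $G$ of $F$ within the tangent space of $F$; $W_{(F,G)}(\xi)=\frac{-1}{2\pi i}\frac{\langle\mathrm{proj}_F\xi,N_F(G)\rangle}{\|\mathrm{proj}_F\xi\|^2}$; $\mathcal{R}_{\mathbf{T}}(\xi)=\mathrm{vol}(F_k)\prod_{j=1}^kW_{(F_{j-1},F_j)}(\xi)$ with $\mathrm{vol}$ the $(\dim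 F_k)$-dimensional Hausdorff measure; $\mathcal{E}_{\mathbf{T}}(\xi)=e^{-2\pi i\langle\xi,x_0\rangle}$ for $x_0\in F_k$. *)

(* classical reals.  Vectors of R^d are lists of reals of
   length d, lattice points of Z^d are lists of integers of length d,
   complex numbers are pairs of reals. *)
From Stdlib Require Import Reals Lra Lia ZArith List ClassicalEpsilon.
Import ListNotations.
Open Scope R_scope.

Definition Cplx := (R * R)%type.
Definition C0 : Cplx := (0, 0).
Definition C1 : Cplx := (1, 0).
Definition Cadd (z w : Cplx) : Cplx := (fst z + fst w, snd z + snd w).
Definition Csub (z w : Cplx) : Cplx := (fst z - fst w, snd z - snd w).
Definition Cmul (z w : Cplx) : Cplx :=
  (fst z * fst w - snd z * snd w, fst z * snd w + snd z * fst w).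
Definition Cscale (r : R) (z : Cplx) : Cplx := (r * fst z, r * snd z).
Definition Cnorm (z : Cplx) : R := sqrt (fst z * fst z + snd z * snd z).
Definition Csum (l : list Cplx) : Cplx := fold_right Cadd C0 l.
Definition Cprod (l : list Cplx) : Cplx := fold_right Cmul C1 l.
Definition Cexpi (theta : R) : Cplx := (cos theta, sin theta).

Definition vec := list R.
Definition vzero (d : nat) : vec := repeat 0 d.
Definition vadd (x y : vec) : vec := map (fun p => fst p + snd p) (combine x y).
Definition vsub (x y : vec) : vec := map (fun p => fst p - snd p) (combine x y).
Definition vscale (c : R) (x : vec) : vec := map (fun a => c * a) x.
Fixpoint dot (x y : vec) : R :=
  match x, y with
  | a :: x', b :: y' => a * b + dot x' y'
  | _, _ => 0
  end.
Fixpoint lincomb (d : nat) (c : list R) (vs : list vec) : vec :=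
  match c, vs with
  | a :: c', v :: vs' => vadd (vscale a v) (lincomb d c' vs')
  | _, _ => vzero d
  end.
Definition Rsum (l : list R) : R := fold_right Rplus 0 l.
Definition IZv (xi : list Z) : vec := map IZR xi.

Definition conv (d : nat) (vs : list vec) (x : vec) : Prop :=
  length x = d /\
  exists c : list R, length c = length vs /\ Forall (Rle 0) c /\
    Rsum c = 1 /\ x = lincomb d c vs.

Definition lin_indep (d : nat) (vs : list vec) : Prop :=
  forall c : list R, length c = length vs ->
    lincomb d c vs = vzero d -> Forall (fun a => a = 0) c.

Definition aff_indep (d : nat) (ps : list vec) : Prop :=
  match ps with
  | [] => True
  | p :: qs => lin_indep d (map (fun q => vsub q p) qs)
  end.

(* has_affdim d F k : the affine hull of F has dimension k (k = -1 iff F empty) *)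
Definition has_affdim (d : nat) (F : vec -> Prop) (k : Z) : Prop :=
  (k = (-1)%Z /\ forall x, ~ F x) \/
  ((0 <= k)%Z /\
   (exists ps, length ps = S (Z.to_nat k) /\ Forall F ps /\ aff_indep d ps) /\
   ~ (exists ps, length ps = S (S (Z.to_nat k)) /\ Forall F ps /\ aff_indep d ps)).

(* F is a face of the convex set K (P itself and the empty set included) *)
Definition face_of (d : nat) (K F : vec -> Prop) : Prop :=
  exists (a : vec) (b : R), length a = d /\
    (forall x, K x -> dot a x <= b) /\
    (forall x, F x <-> (K x /\ dot a x = b)).

Definition facet_of (d : nat) (F G : vec -> Prop) : Prop :=
  face_of d F G /\ exists k, has_affdim d F k /\ has_affdim d G (k - 1).

Definition lin (d : nat) (F : vec -> Prop) (v : vec) : Prop :=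
  length v = d /\
  exists (c : list R) (xs ys : list vec),
    length xs = length c /\ length ys = length c /\ Forall F xs /\ Forall F ys /\
    v = lincomb d c (map (fun p => vsub (fst p) (snd p)) (combine xs ys)).

Definition orth (d : nat) (F : vec -> Prop) (xi : vec) : Prop :=
  forall v, lin d F v -> dot xi v = 0.

Definition proj (d : nat) (F : vec -> Prop) (xi : vec) : vec :=
  epsilon (inhabits (vzero d))
    (fun w => lin d F w /\ forall v, lin d F v -> dot (vsub xi w) v = 0).

Definition outer_normal (d : nat) (F G : vec -> Prop) : vec :=
  epsilon (inhabits (vzero d))
    (fun n => lin d F n /\ dot n n = 1 /\ (forall v, lin d G v -> dot n v = 0) /\
              forall x y, F x -> G y -> dot n (vsub x y) <= 0).

(* W_{(F,G)}(xi) = -1/(2 pi i) <proj_F xi, N_F(G)> / |proj_F xi|^2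
               = i/(2 pi) * <proj_F xi, N_F(G)> / |proj_F xi|^2 *)
Definition Wfac (d : nat) (F G : vec -> Prop) (xi : vec) : Cplx :=
  let p := proj d F xi in
  (0, (dot p (outer_normal d F G) / dot p p) / (2 * PI)).

Fixpoint all_seqs {A : Type} (l : list A) (k : nat) : list (list A) :=
  match k with
  | O => [[]]
  | S k' => flat_map (fun a => map (cons a) (all_seqs l k')) l
  end.

Definition Zrange (K : nat) : list Z :=
  map (fun j => (Z.of_nat j - Z.of_nat K)%Z) (seq 0 (2 * K + 1)).

Definition affdim_nat (d : nat) (F : vec -> Prop) : nat :=
  epsilon (inhabits O) (fun m => has_affdim d F (Z.of_nat m)).

Definition onb (d : nat) (F : vec -> Prop) (m : nat) : list vec :=
  epsilon (inhabits [])
    (fun us => length us = m /\ Forall (fun u => length u = d) us /\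
       (forall j l, (j < m)%nat -> (l < m)%nat ->
          dot (nth j us []) (nth l us []) = if Nat.eqb j l then 1 else 0) /\
       (forall v, lin d F v <-> exists c, length c = m /\ v = lincomb d c us)).

Definition some_point (d : nat) (F : vec -> Prop) : vec :=
  epsilon (inhabits (vzero d)) F.

Definition grid_count (d : nat) (F : vec -> Prop) (n : nat) : nat :=
  let m := affdim_nat d F in
  let us := onb d F m in
  let x0 := some_point d F in
  length (filter (fun k =>
     if excluded_middle_informative
          (F (vadd x0 (lincomb d (map (fun z => IZR z / INR (S n)) k) us)))
     then true else false)
     (all_seqs (Zrange (n * n)) m)).

(* (dim F)-dimensional volume of the (bounded, convex) set F, as the
   Jordan content in an orthonormal coordinate system of its affine hull *)
Definition vol (d : nat) (F : vec -> Prop) : R :=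
  epsilon (inhabits 0)
    (fun v => Un_cv (fun n => INR (grid_count d F n) / INR (S n) ^ (affdim_nat d F)) v).

Fixpoint all_masks (n : nat) : list (list bool) :=
  match n with
  | O => [[]]
  | S n' => map (cons true) (all_masks n') ++ map (cons false) (all_masks n')
  end.

Fixpoint select {A : Type} (m : list bool) (l : list A) : list A :=
  match m, l with
  | b :: m', a :: l' => if b then a :: select m' l' else select m' l'
  | _, _ => []
  end.

Definition mface (d : nat) (Vr : list vec) (m : list bool) : vec -> Prop :=
  conv d (select m Vr).

(* the mask is the canonical code of its face: it selects exactly the
   generating points lying in the face *)
Definition canonical_mask (d : nat) (Vr : list vec) (m : list bool) : Prop :=
  Forall2 (fun b v => b = true <-> mface d Vr m v) m Vr.

(* ms = (F_0, ..., F_k) is a rooted chain P = F_0 -> F_1 -> ... -> F_k *)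
Definition chain_ok (d : nat) (Vr : list vec) (ms : list (list bool)) : Prop :=
  (1 <= length ms)%nat /\
  Forall (canonical_mask d Vr) ms /\
  (forall x, mface d Vr (hd [] ms) x <-> conv d Vr x) /\
  (forall j, (S j < length ms)%nat ->
     facet_of d (mface d Vr (nth j ms [])) (mface d Vr (nth (S j) ms []))).

Definition chain_term (d : nat) (Vr : list vec) (ms : list (list bool))
  (t eps : R) (xi : list Z) : Cplx :=
  let k := pred (length ms) in
  let Fs := map (mface d Vr) ms in
  let Fk := nth k Fs (fun _ => False) in
  let Fk1 := nth (pred k) Fs (fun _ => False) in
  let x := IZv xi in
  let inS := if Nat.eqb k 0 then Forall (fun z => z = 0%Z) xi
             else (orth d Fk x /\ ~ orth d Fk1 x) in
  let RT := Cscale (vol d Fk)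
              (Cprod (map (fun j => Wfac d (nth j Fs (fun _ => False))
                                          (nth (S j) Fs (fun _ => False)) x)
                          (seq 0 k))) in
  let ET := Cexpi (- (2 * PI) * dot (vscale t x) (some_point d Fk)) in
  if excluded_middle_informative inS
  then Cscale (exp (- PI * eps * dot x x)) (Cmul RT ET)
  else C0.

Definition chain_sum (d : nat) (V : list (list Z)) (k : nat) (t eps : R)
  (xi : list Z) : Cplx :=
  let Vr := map IZv V in
  Csum (map (fun ms =>
          if excluded_middle_informative (chain_ok d Vr ms)
          then chain_term d Vr ms t eps xi else C0)
        (all_seqs (all_masks (length V)) (S k))).

(* unconditional (unordered) summation over Z^d *)
Definition has_sum_Zd (d : nat) (f : list Z -> Cplx) (L : Cplx) : Prop :=
  forall eta, 0 < eta ->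
    exists F0 : list (list Z), Forall (fun xi => length xi = d) F0 /\
      forall F, NoDup F -> Forall (fun xi => length xi = d) F -> incl F0 F ->
        Cnorm (Csub (Csum (map f F)) L) < eta.

(* quasi_coeff_lim d V i t L :  a_i(t) = L, i.e.
   L = lim_{eps -> 0+} sum_{xi in Z^d} sum_{l(T) = d - i} ... *)
Definition quasi_coeff_lim (d : nat) (V : list (list Z)) (i : nat) (t : R) (L : Cplx)
  : Prop :=
  exists S : R -> Cplx,
    (forall eps, 0 < eps -> has_sum_Zd d (chain_sum d V (d - i) t eps) (S eps)) /\
    (forall eta, 0 < eta -> exists delta, 0 < delta /\
       forall eps, 0 < eps < delta -> Cnorm (Csub (S eps) L) < eta).

From Stdlib Require Import Reals ZArith List Lra Lia ClassicalEpsilon FunctionalExtensionality.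
Import ListNotations.
Open Scope R_scope.

(* The parameter t enters a_i(t) only through the factor
   E_T(t xi) = exp(-2 pi i t <xi, x0>) with x0 a point of the last face F_k
   of the chain, so it suffices that <xi, x0> is an integer whenever
   xi is a lattice point of S(T).  Such a xi is orthogonal to the tangent
   space of F_k, hence <xi, x0> = <xi, v> for any vertex v of F_k, and the
   vertices are lattice points.  The encoding of faces by masks also admits
   an empty last face F_k; it is then a facet of a single point F_(k-1),
   whose tangent space is trivial, so S(T) is empty and the term vanishes. *)

Lemma len_vadd (a b : vec) : length (vadd a b) = Nat.min (length a) (length b).
Proof. unfold vadd; rewrite length_map, length_combine; reflexivity. Qed.

Lemma len_vsub (a b : vec) : length (vsub a b) = Nat.min (length a) (length b).
Proof. unfold vsub; rewrite length_map, length_combine; reflexivity. Qed.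

Lemma len_vscale (c : R) (a : vec) : length (vscale c a) = length a.
Proof. unfold vscale; apply length_map. Qed.

Lemma len_vzero (d : nat) : length (vzero d) = d.
Proof. apply repeat_length. Qed.

Lemma len_lincomb (d : nat) (c : list R) (ws : list vec) :
  Forall (fun w => length w = d) ws -> length (lincomb d c ws) = d.
Proof.
  intros H; revert c; induction H as [|w ws Hw _ IH]; intros [|a c]; simpl;
    try apply len_vzero.
  rewrite len_vadd, len_vscale, IH, Hw; lia.
Qed.

Lemma vadd_vzero_r (a : vec) : vadd a (vzero (length a)) = a.
Proof. induction a as [|x a IH]; simpl; auto. unfold vadd, vzero in *; simpl; rewrite IH; f_equal; lra. Qed.

Lemma vadd_vzero_l (a : vec) : vadd (vzero (length a)) a = a.
Proof. induction a as [|x a IH]; simpl; auto. unfold vadd, vzero in *; simpl; rewrite IH; f_equal; lra. Qed.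

Lemma vscale1 (a : vec) : vscale 1 a = a.
Proof. induction a as [|x a IH]; simpl; auto. unfold vscale in *; simpl; rewrite IH; f_equal; lra. Qed.

Lemma vscale0 (a : vec) : vscale 0 a = vzero (length a).
Proof. induction a as [|x a IH]; simpl; auto. unfold vscale, vzero in *; simpl; rewrite IH; f_equal; lra. Qed.

Lemma lincomb_repeat0 (d : nat) (ws : list vec) :
  Forall (fun w => length w = d) ws -> lincomb d (repeat 0 (length ws)) ws = vzero d.
Proof.
  intros H; induction H as [|w ws Hw _ IH]; simpl; auto.
  rewrite IH, vscale0, Hw, <- (len_vzero d) at 1. apply vadd_vzero_l.
Qed.

Lemma dot_vadd (x a b : vec) :
  length a = length b -> dot x (vadd a b) = dot x a + dot x b.
Proof.
  revert a b; induction x as [|u x IH]; intros [|p a] [|q b] H; simpl in *;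
    try lia; try lra.
  unfold vadd in *; simpl; rewrite IH by lia; lra.
Qed.

Lemma dot_vsub (x a b : vec) :
  length a = length b -> dot x (vsub a b) = dot x a - dot x b.
Proof.
  revert a b; induction x as [|u x IH]; intros [|p a] [|q b] H; simpl in *;
    try lia; try lra.
  unfold vsub in *; simpl; rewrite IH by lia; lra.
Qed.

Lemma dot_vscale_r (x : vec) (c : R) (a : vec) : dot x (vscale c a) = c * dot x a.
Proof.
  revert a; induction x as [|u x IH]; intros [|p a]; simpl; try lra.
  unfold vscale in *; rewrite IH; lra.
Qed.

Lemma dot_vscale_l (x : vec) (c : R) (a : vec) : dot (vscale c x) a = c * dot x a.
Proof.
  revert a; induction x as [|u x IH]; intros [|p a]; simpl; try lra.
  unfold vscale in *; rewrite IH; lra.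
Qed.

Lemma dot_vzero (d : nat) (x : vec) : dot x (vzero d) = 0.
Proof. revert x; induction d as [|d IH]; intros [|u x]; simpl; try lra. unfold vzero in *; rewrite IH; lra. Qed.

Lemma dot_lincomb_eq0 (d : nat) (x : vec) (c : list R) (ws : list vec) :
  Forall (fun w => length w = d /\ dot x w = 0) ws -> dot x (lincomb d c ws) = 0.
Proof.
  intros H; revert c; induction H as [|w ws [Hw Hxw] H IH]; intros [|a c]; simpl;
    try apply dot_vzero.
  rewrite dot_vadd, dot_vscale_r, IH, Hxw; [lra|].
  rewrite len_vscale, len_lincomb; auto.
  eapply Forall_impl; [|exact H]; simpl; tauto.
Qed.

Lemma dot_IZv_integral (a b : list Z) : exists n, dot (IZv a) (IZv b) = IZR n.
Proof.
  revert b; induction a as [|u a IH]; intros [|w b]; try (exists 0%Z; reflexivity).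
  destruct (IH b) as [n Hn]; exists (u * w + n)%Z.
  unfold IZv in *; simpl; rewrite Hn, plus_IZR, mult_IZR; reflexivity.
Qed.

Lemma dot_IZv_zero_l (xi : list Z) (p : vec) :
  Forall (fun z => z = 0%Z) xi -> dot (IZv xi) p = 0.
Proof.
  intros H; revert p; induction H as [|z xi Hz _ IH]; intros [|q p]; simpl; try lra.
  subst; unfold IZv in IH; rewrite IH; lra.
Qed.

Lemma Forall_select {A : Type} (P : A -> Prop) (m : list bool) (l : list A) :
  Forall P l -> Forall P (select m l).
Proof.
  intros H; revert m; induction H as [|a l Ha _ IH]; intros [|[|] m]; simpl; auto.
Qed.

Lemma conv_nil (d : nat) (x : vec) : ~ conv d [] x.
Proof. intros [_ [[|a c] [Hc [_ [Hs _]]]]]; simpl in *; [lra | lia]. Qed.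

Lemma conv_generator (d : nat) (vs : list vec) (v : vec) :
  Forall (fun w => length w = d) vs -> In v vs -> conv d vs v.
Proof.
  intros H; induction H as [|w vs Hw Hvs IH]; intros Hin; [destruct Hin|].
  destruct Hin as [<-|Hin].
  - split; auto. exists (1 :: repeat 0 (length vs)); simpl; rewrite repeat_length.
    repeat split; auto.
    + constructor; [lra|]. apply Forall_forall; intros z Hz; apply repeat_spec in Hz; lra.
    + assert (Rsum (repeat 0 (length vs)) = 0) as ->
        by (induction (length vs); simpl; lra).
      lra.
    + rewrite lincomb_repeat0, vscale1, <- Hw by auto. symmetry; apply vadd_vzero_r.
  - destruct (IH Hin) as [Hl [c [Hc [Hc0 [Hc1 ->]]]]]. split; auto.
    exists (0 :: c); simpl; repeat split; auto; try lia; try lra.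
    + constructor; [lra | exact Hc0].
    + pose proof (vadd_vzero_l (lincomb d c vs)) as E; rewrite Hl in E.
      rewrite vscale0, Hw, E; reflexivity.
Qed.

Lemma lin_vsub (d : nat) (F : vec -> Prop) (p q : vec) :
  F p -> F q -> length p = d -> length q = d -> lin d F (vsub p q).
Proof.
  intros Hp Hq Hlp Hlq. split; [rewrite len_vsub; lia|].
  exists [1], [p], [q]; simpl; repeat split; auto.
  rewrite vscale1. replace d with (length (vsub p q)) at 1 by (rewrite len_vsub; lia).
  symmetry; apply vadd_vzero_r.
Qed.

Lemma orth_dot_eq (d : nat) (F : vec -> Prop) (xi p q : vec) :
  orth d F xi -> F p -> F q -> length p = d -> length q = d -> dot xi p = dot xi q.
Proof.
  intros Ho Hp Hq Hlp Hlq.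
  pose proof (Ho _ (lin_vsub d F p q Hp Hq Hlp Hlq)) as E.
  rewrite dot_vsub in E by lia; lra.
Qed.

Lemma orth_conv_dot_integral (d : nat) (vs : list vec) (xi : list Z) (p : vec) :
  Forall (fun v => length v = d) vs -> Forall (fun v => exists z, v = IZv z) vs ->
  orth d (conv d vs) (IZv xi) -> conv d vs p -> exists n, dot (IZv xi) p = IZR n.
Proof.
  intros Hlen Hint Ho Hp.
  destruct vs as [|v vs]; [exfalso; eapply conv_nil; eauto|].
  destruct (Forall_inv Hint) as [z ->].
  assert (Hv : conv d (IZv z :: vs) (IZv z)) by (apply conv_generator; simpl; auto).
  rewrite (orth_dot_eq d _ _ p (IZv z) Ho Hp Hv)
    by (destruct Hp; auto; exact (Forall_inv Hlen)).
  apply dot_IZv_integral.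
Qed.

Lemma facet_of_empty_affdim0 (d : nat) (F G : vec -> Prop) :
  facet_of d F G -> (forall y, ~ G y) -> has_affdim d F 0.
Proof.
  intros [_ [k [HF HG]]] Hemp.
  enough (k = 0%Z) by (subst; exact HF).
  destruct HG as [[Hk _]|[_ [[[|q ps] [Hps [HGps _]]] _]]]; [lia|discriminate|].
  inversion HGps; exfalso; eapply Hemp; eauto.
Qed.

(* If <x, p - q> <> 0 then [q; p] would be affinely independent. *)
Lemma orth_affdim0 (d : nat) (F : vec -> Prop) (x : vec) :
  has_affdim d F 0 -> (forall y, F y -> length y = d) -> orth d F x.
Proof.
  intros [[Hk _]|[_ [_ Hno]]] Hlen; [discriminate|].
  intros v [_ [c [xs [ys [_ [_ [Hxs [Hys ->]]]]]]]].
  apply dot_lincomb_eq0, Forall_forall; intros w Hw.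
  apply in_map_iff in Hw; destruct Hw as [[p q] [<- Hin]]; simpl.
  rewrite Forall_forall in Hxs, Hys.
  pose proof (Hxs _ (in_combine_l _ _ _ _ Hin)) as Hp.
  pose proof (Hys _ (in_combine_r _ _ _ _ Hin)) as Hq.
  assert (length p = d) by auto. assert (length q = d) by auto.
  split; [rewrite len_vsub; lia|].
  destruct (Req_dec (dot x (vsub p q)) 0) as [E|E]; auto.
  exfalso; apply Hno. exists [q; p]; simpl; repeat split; auto.
  intros [|c0 [|]] Hc Hz; simpl in Hc; try lia.
  apply (f_equal (dot x)) in Hz; simpl in Hz.
  rewrite dot_vadd, dot_vscale_r, !dot_vzero in Hz
    by (rewrite len_vscale, len_vsub, len_vzero; lia).
  constructor; auto. rewrite Rplus_0_r in Hz; apply Rmult_integral in Hz; lra.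
Qed.

Lemma some_point_spec (d : nat) (F : vec -> Prop) :
  (exists y, F y) -> F (some_point d F).
Proof. intros Hne; unfold some_point; apply epsilon_spec; exact Hne. Qed.

Lemma Cexpi_add_2PI_mult (x : R) (z : Z) : Cexpi (x + 2 * IZR z * PI) = Cexpi x.
Proof.
  assert (Hnat : forall y n, Cexpi (y + 2 * INR n * PI) = Cexpi y)
    by (intros; unfold Cexpi; rewrite cos_period, sin_period; reflexivity).
  destruct (Z_le_gt_dec 0 z).
  - replace z with (Z.of_nat (Z.to_nat z)) by lia. rewrite <- INR_IZR_INZ; apply Hnat.
  - replace z with (- Z.of_nat (Z.to_nat (- z)))%Z by lia.
    rewrite opp_IZR, <- INR_IZR_INZ, <- (Hnat _ (Z.to_nat (- z))).
    f_equal; ring.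
Qed.

Section RootedChains.

Variables (d : nat) (Vr : list vec).
Hypothesis Vr_dim : Forall (fun v => length v = d) Vr.
Hypothesis Vr_integral : Forall (fun v => exists z, v = IZv z) Vr.

Lemma mface_dim (m : list bool) (y : vec) : mface d Vr m y -> length y = d.
Proof. intros [Hy _]; exact Hy. Qed.

Lemma orth_mface_some_point_integral (m : list bool) (xi : list Z) :
  orth d (mface d Vr m) (IZv xi) -> (exists y, mface d Vr m y) ->
  exists n, dot (IZv xi) (some_point d (mface d Vr m)) = IZR n.
Proof.
  intros Ho Hne.
  apply (orth_conv_dot_integral d (select m Vr)); try apply Forall_select; auto.
  apply some_point_spec; exact Hne.
Qed.

(* The test xi \in S(T) exactly as written in [chain_term], so the two are convertible. *)
Definition in_S (ms : list (list bool)) (xi : list Z) : Prop :=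
  let k := pred (length ms) in
  let Fs := map (mface d Vr) ms in
  if Nat.eqb k 0 then Forall (fun z => z = 0%Z) xi
  else orth d (nth k Fs (fun _ => False)) (IZv xi) /\
       ~ orth d (nth (pred k) Fs (fun _ => False)) (IZv xi).

Lemma in_S_last_face_dot_integral (ms : list (list bool)) (xi : list Z) :
  chain_ok d Vr ms -> in_S ms xi ->
  exists n, dot (IZv xi)
    (some_point d (nth (pred (length ms)) (map (mface d Vr) ms) (fun _ => False)))
  = IZR n.
Proof.
  intros [Hlen [_ [_ Hfacet]]]. unfold in_S.
  set (k := pred (length ms)).
  assert (Hnth : forall j, (j < length ms)%nat ->
            nth j (map (mface d Vr) ms) (fun _ => False) = mface d Vr (nth j ms [])).
  { intros j Hj. rewrite (nth_indep _ _ (mface d Vr [])) by (rewrite length_map; lia).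
    apply map_nth. }
  destruct (Nat.eqb_spec k 0) as [Hk|Hk].
  - intros Hxi; exists 0%Z; apply dot_IZv_zero_l; exact Hxi.
  - rewrite !Hnth by (unfold k; lia). intros [Ho Hno].
    destruct (classic (exists y, mface d Vr (nth k ms []) y)) as [Hne|Hemp].
    + apply orth_mface_some_point_integral; assumption.
    + exfalso; apply Hno, orth_affdim0; [|apply mface_dim].
      apply facet_of_empty_affdim0 with (G := mface d Vr (nth k ms [])).
      * replace k with (S (pred k)) at 2 by lia. apply Hfacet; unfold k; lia.
      * intros y Hy; apply Hemp; exists y; exact Hy.
Qed.

Lemma chain_term_periodic (ms : list (list bool)) (t eps : R) (xi : list Z) :
  chain_ok d Vr ms -> chain_term d Vr ms (t + 1) eps xi = chain_term d Vr ms t eps xi.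
Proof.
  intros Hok. unfold chain_term; cbv zeta.
  destruct (excluded_middle_informative _) as [HS|]; [|reflexivity].
  destruct (in_S_last_face_dot_integral ms xi Hok HS) as [n Hn].
  rewrite !dot_vscale_l, Hn.
  replace (- (2 * PI) * ((t + 1) * IZR n))
    with (- (2 * PI) * (t * IZR n) + 2 * IZR (- n) * PI) by (rewrite opp_IZR; ring).
  rewrite Cexpi_add_2PI_mult; reflexivity.
Qed.

End RootedChains.

Lemma chain_sum_periodic (d : nat) (V : list (list Z)) (k : nat) (t : R) :
  Forall (fun v => length v = d) V -> chain_sum d V k (t + 1) = chain_sum d V k t.
Proof.
  intros HV. do 2 (apply functional_extensionality; intro). unfold chain_sum.
  f_equal; apply map_ext; intros ms.
  destruct (excluded_middle_informative _); [|reflexivity].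
  apply chain_term_periodic; auto.
  - apply Forall_map; eapply Forall_impl; [|exact HV].
    intros v Hv; unfold IZv; rewrite length_map; exact Hv.
  - apply Forall_map, Forall_forall; intros v _; eauto.
Qed.

Theorem theorem7p1 (d : nat) (V : list (list Z)) :
  Forall (fun v => length v = d) V ->
  has_affdim d (conv d (map IZv V)) (Z.of_nat d) ->
  forall (i : nat), (i <= d)%nat ->
  forall (t : R), 0 < t ->
  forall L : Cplx, quasi_coeff_lim d V i (t + 1) L <-> quasi_coeff_lim d V i t L.
Proof.
  intros HV _ i _ t _ L. unfold quasi_coeff_lim.
  rewrite (chain_sum_periodic d V (d - i) t HV).
  reflexivity.
Qed.
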